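(* Assume the setting in the context (Condition ASM). Fix $c>1$, $\bar c=(c+1)/(c-1)$, and let $\widehat\beta$ be a LASSO solution. If $\lambda\geqslant c\,n\|S\|_\infty$, then $$\|\widehat\beta-\beta_0\|_1\leqslant\frac{(1+2\bar c)\sqrt s}{\kappa_{2\bar c}}\Big[\Big(1+\frac1c\Big)\frac{\lambda\sqrt s}{n\kappa_{\bar c}}+2c_s\Big]+\Big(1+\frac{1}{2\bar c}\Big)\frac{2c}{c-1}\frac{n}{\lambda}c_s^2,$$ where $c_s=0$ in the parametric case $f_i=x_i'\beta_0$.
   Context: Condition ASM: observations $(y_i,z_i)$, $i=1,\dots,n$, $z_i$ fixed, $y_i=f(z_i)+\varepsilon_i$, $\varepsilon_i$ i.i.d. $N(0,\sigma^2)$; $f_i=f(z_i)$, $\mathbb{E}_n[a_i]=n^{-1}\sum_ia_i$; $x_i=P(z_i)\in\mathbb{R}^p$ (including a constant) with $\mathbb{E}_n[x_{ij}^2]=1$. $\beta_0$ is any solution of $\min_\beta\mathbb{E}_n[(f_i-x_i'\beta)^2]+\sigma^2\|\beta\|_0/n$; $s=\|\beta_0\|_0$, $T=\mathrm{support}(\beta_0)$, $c_s=\sqrt{\mathbb{E}_n[(f_i-x_i'\beta_0)^2]}\leqslant K\sigma\sqrt{s/n}$ for an absolute constant $K$. $\|\delta\|_{2,n}=\sqrt{\mathbb{E}_n[(x_i'\delta)^2]}$; $S=2\mathbb{E}_n[x_i\varepsilon_i]$; LASSO: $\widehat\beta\in\arg\min_\beta\mathbb{E}_n[(y_i-x_i'\beta)^2]+\frac\lambda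 n\|\beta\|_1$, $\lambda>0$. $\delta_A$ is $\delta$ with entries outside $A$ set to zero. Restricted eigenvalue: for $C>0$, $\kappa_C=\min\{\sqrt s\|\delta\|_{2,n}/\|\delta_T\|_1:\|\delta_{T^c}\|_1\leqslant C\|\delta_T\|_1,\ \delta_T\neq0\}$. *)

From HB Require Import structures.
From mathcomp Require Import all_boot all_order all_algebra.
From mathcomp Require Import classical_sets reals.
Set Implicit Arguments. Unset Strict Implicit. Unset Printing Implicit Defensive.
Import Order.TTheory GRing.Theory Num.Theory.
Local Open Scope ring_scope.
Local Open Scope classical_set_scope.

Section Defs.
Variable R : realType.

Definition En (n : nat) (a : 'I_n -> R) : R := (\sum_(i < n) a i) / n%:R.

Definition xdot (n p : nat) (X : 'I_n -> 'I_p -> R) (b : 'I_p -> R) (i : 'I_n) : R :=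
  \sum_(j < p) X i j * b j.

Definition norm1 (p : nat) (b : 'I_p -> R) : R := \sum_(j < p) `|b j|.
Definition norminf (p : nat) (b : 'I_p -> R) : R := \big[Num.max/0]_(j < p) `|b j|.
Definition supp (p : nat) (b : 'I_p -> R) : {set 'I_p} := [set j | b j != 0].
Definition norm0 (p : nat) (b : 'I_p -> R) : nat := #|supp b|.

Definition norm2n (n p : nat) (X : 'I_n -> 'I_p -> R) (d : 'I_p -> R) : R :=
  Num.sqrt (En (fun i => (xdot X d i) ^+ 2)).

Definition restr (p : nat) (A : {set 'I_p}) (d : 'I_p -> R) : 'I_p -> R :=
  fun j => if j \in A then d j else 0.

(* restricted eigenvalue kappa_C (min = inf of the attained values) *)
Definition kappa (n p : nat) (X : 'I_n -> 'I_p -> R) (T : {set 'I_p}) (C : R) : R :=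
  inf [set r | exists d : 'I_p -> R,
         [/\ norm1 (restr (~: T) d) <= C * norm1 (restr T d),
             restr T d <> (fun _ => 0) &
             r = Num.sqrt (#|T|%:R) * norm2n X d / norm1 (restr T d)]].

End Defs.

From HB Require Import structures.
From mathcomp Require Import all_boot all_order all_algebra.
From mathcomp Require Import classical_sets reals.
From mathcomp Require Import ring lra.
Import Order.TTheory GRing.Theory Num.Theory.
Set Implicit Arguments.
Unset Strict Implicit.
Unset Printing Implicit Defensive.

Local Open Scope ring_scope.

(* Comparing the LASSO objective at [betahat] and at [beta0] gives, for
   [d = betahat - beta0] and [L = lambda / n], the basic inequality
     |d|_{2,n}^2 <= 2 c_s |d|_{2,n} + (L / c) |d|_1 + L (|d_T|_1 - |d_T^c|_1),
   with Cauchy-Schwarz for the approximation error and Hoelder for the noise.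
   If [d] lies in the cone |d_T^c|_1 <= 2 cbar |d_T|_1, the restricted
   eigenvalues kappa_cbar and kappa_{2 cbar} turn it into a bound on |d|_{2,n}
   and then on |d|_1.  Otherwise it forces
   |d_T^c|_1 <= (2c / (c - 1)) (n / lambda) c_s^2, and |d_T|_1 is smaller
   still.  The stated bound is the sum of the two cases. *)

Section EmpiricalMean.
Variables (R : realType) (n : nat).
Implicit Types (F G a b : 'I_n -> R).

Lemma eq_En F G : (forall i, F i = G i) -> En F = En G.
Proof. by move=> FG; rewrite /En (eq_bigr G). Qed.

Lemma EnD F G : En (fun i => F i + G i) = En F + En G.
Proof. by rewrite /En big_split mulrDl. Qed.

Lemma EnZ (k : R) F : En (fun i => k * F i) = k * En F.
Proof. by rewrite /En -mulr_sumr mulrA. Qed.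

Lemma En_ge0 F : (forall i, 0 <= F i) -> 0 <= En F.
Proof. by move=> F0; rewrite divr_ge0 // sumr_ge0. Qed.

Lemma En_sqr_ge0 a : 0 <= En (fun i => a i ^+ 2).
Proof. by apply: En_ge0 => i; exact: sqr_ge0. Qed.

Lemma En_eq0 F : (forall i, 0 <= F i) -> En F = 0 -> forall i, F i = 0.
Proof.
move=> F0 /eqP; rewrite mulf_eq0 invr_eq0 pnatr_eq0 => /orP[/eqP sum0 i|/eqP n0 i].
  exact: (psumr_eq0P _ sum0).
by have := ltn_ord i; rewrite {2}n0.
Qed.

Lemma En_mul_le a b :
  En (fun i => a i * b i)
    <= Num.sqrt (En (fun i => a i ^+ 2)) * Num.sqrt (En (fun i => b i ^+ 2)).
Proof.
have vanish a' b' : Num.sqrt (En (fun i => a' i ^+ 2)) = 0 -> En (fun i => a' i * b' i) = 0.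
  move=> /eqP; rewrite sqrtr_eq0 => A0.
  have A'0 : En (fun i => a' i ^+ 2) = 0 by apply/le_anti; rewrite A0 En_sqr_ge0.
  have a'0 := En_eq0 (fun i => sqr_ge0 (a' i)) A'0.
  rewrite (@eq_En _ (fun _ => 0)) => [|i]; first by rewrite /En big1 ?mul0r.
  by move/eqP: (a'0 i); rewrite sqrf_eq0 => /eqP ->; rewrite mul0r.
set p := Num.sqrt _; set q := Num.sqrt _.
have [p0|pn0] := eqVneq p 0; first by rewrite vanish // p0 mul0r.
have [q0|qn0] := eqVneq q 0.
  by rewrite q0 mulr0 -(vanish b a q0) le_eqVlt (eq_En (fun i => mulrC _ _)) eqxx.
have pq0 : 0 < p * q by rewrite mulr_gt0 // lt0r ?pn0 ?qn0 ?sqrtr_ge0.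
have pA : En (fun i => a i ^+ 2) = p ^+ 2 by rewrite sqr_sqrtr ?En_sqr_ge0.
have qB : En (fun i => b i ^+ 2) = q ^+ 2 by rewrite sqr_sqrtr ?En_sqr_ge0.
have := En_sqr_ge0 (fun i => q * a i - p * b i).
rewrite (@eq_En _ (fun i => q ^+ 2 * a i ^+ 2 + (- 2 * p * q) * (a i * b i)
                            + p ^+ 2 * b i ^+ 2)) => [|i]; last by ring.
rewrite !EnD !EnZ pA qB.
have -> : q ^+ 2 * p ^+ 2 + - 2 * p * q * En (fun i => a i * b i) + p ^+ 2 * q ^+ 2
        = 2 * (p * q) * (p * q - En (fun i => a i * b i)) by ring.
by rewrite pmulr_rge0 ?subr_ge0 // mulr_gt0.
Qed.
End EmpiricalMean.

Section Norms.
Variables (R : realType) (p : nat).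
Implicit Types (d S : 'I_p -> R) (T : {set 'I_p}).

Lemma norm1_ge0 d : 0 <= norm1 d.
Proof. exact: sumr_ge0. Qed.

Lemma norm1_restr_split T d : norm1 d = norm1 (restr T d) + norm1 (restr (~: T) d).
Proof.
rewrite /norm1 -big_split; apply: eq_bigr => j _ /=.
by rewrite /restr inE; case: (j \in T); rewrite normr0 ?addr0 ?add0r.
Qed.

Lemma norm1_sub_supp (b0 b : 'I_p -> R) :
  norm1 b0 - norm1 b <= norm1 (restr (supp b0) (fun j => b j - b0 j))
                        - norm1 (restr (~: supp b0) (fun j => b j - b0 j)).
Proof.
rewrite /norm1 -!sumrB; apply: ler_sum => j _.
rewrite /restr !inE; case: ifPn => [_|]; last first.
  by rewrite negbK => /eqP ->; rewrite normr0 !subr0 sub0r.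
rewrite normr0 subr0 lerBlDr distrC.
by have := ler_normD (b0 j - b j) (b j); rewrite subrK.
Qed.

Lemma dot_le_norminf_norm1 d S : \sum_(j < p) d j * S j <= norminf S * norm1 d.
Proof.
rewrite /norm1 mulr_sumr; apply: ler_sum => j _.
apply: le_trans (ler_norm _) _; rewrite normrM mulrC ler_wpM2r //.
exact: le_bigmax.
Qed.
End Norms.

Section Design.
Variables (R : realType) (n p : nat) (X : 'I_n -> 'I_p -> R).
Implicit Types (d : 'I_p -> R) (e : 'I_n -> R).

Lemma xdotB (b b0 : 'I_p -> R) i : xdot X (fun j => b j - b0 j) i = xdot X b i - xdot X b0 i.
Proof. by rewrite /xdot -sumrB; apply: eq_bigr => j _; rewrite mulrBr. Qed.

Lemma En_mul_xdot e d :
  En (fun i => e i * xdot X d i) = \sum_(j < p) d j * En (fun i => X i j * e i).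
Proof.
rewrite /En /xdot; under [RHS]eq_bigr do rewrite mulrA; rewrite -mulr_suml.
congr (_ / _); under eq_bigr do rewrite mulr_sumr; rewrite exchange_big.
by apply: eq_bigr => j _; rewrite mulr_sumr; apply: eq_bigr => i _; ring.
Qed.

Lemma kappa_mul_le T (C : R) d :
  norm1 (restr (~: T) d) <= C * norm1 (restr T d) ->
  kappa X T C * norm1 (restr T d) <= Num.sqrt #|T|%:R * norm2n X d.
Proof.
move=> cone; have [->|dT0] := eqVneq (norm1 (restr T d)) 0.
  by rewrite mulr0 mulr_ge0 ?sqrtr_ge0.
rewrite -ler_pdivlMr ?lt0r ?dT0 ?norm1_ge0 //; apply: ge_inf.
  by exists 0 => _ [d' [_ _ ->]]; rewrite divr_ge0 ?norm1_ge0 ?mulr_ge0 ?sqrtr_ge0.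
exists d; split=> // dT_eq0; move: dT0; rewrite dT_eq0 /norm1 big1 ?eqxx // => j _.
exact: normr0.
Qed.
End Design.

Section BasicInequality.
Variables (R : realType) (n p : nat) (X : 'I_n -> 'I_p -> R) (f eps : 'I_n -> R).
Variables (b0 bh : 'I_p -> R) (lam : R).

Local Notation d := (fun j => bh j - b0 j).
Local Notation resid b := (fun i => (f i + eps i - xdot X b i) ^+ 2).

Lemma lasso_basic_ineq : 0 <= lam ->
  En (resid bh) + lam / n%:R * norm1 bh <= En (resid b0) + lam / n%:R * norm1 b0 ->
  norm2n X d ^+ 2
    <= 2 * Num.sqrt (En (fun i => (f i - xdot X b0 i) ^+ 2)) * norm2n X d
       + norminf (fun j => 2 * En (fun i => X i j * eps i)) * norm1 d
       + lam / n%:R * (norm1 (restr (supp b0) d) - norm1 (restr (~: supp b0) d)).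
Proof.
move=> lam0 opt.
have expand : En (resid bh) = En (resid b0)
    + (-2) * En (fun i => (f i - xdot X b0 i) * xdot X d i)
    + (-2) * En (fun i => eps i * xdot X d i) + En (fun i => xdot X d i ^+ 2).
  by rewrite -!EnZ -!EnD; apply: eq_En => i; rewrite xdotB; ring.
have approx : En (fun i => (f i - xdot X b0 i) * xdot X d i)
    <= Num.sqrt (En (fun i => (f i - xdot X b0 i) ^+ 2)) * norm2n X d by exact: En_mul_le.
have noise : 2 * En (fun i => eps i * xdot X d i)
             <= norminf (fun j => 2 * En (fun i => X i j * eps i)) * norm1 d.
  rewrite En_mul_xdot mulr_sumr; under eq_bigr do rewrite mulrCA.
  exact: dot_le_norminf_norm1.
have penalty := ler_wpM2l (divr_ge0 lam0 (ler0n R n)) (norm1_sub_supp b0 bh).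
rewrite {1}/norm2n sqr_sqrtr ?En_sqr_ge0 //.
move: opt penalty; rewrite expand mulrBr; lra.
Qed.
End BasicInequality.

Lemma le_of_sqr_le_mul (R : realDomainType) (x y : R) : 0 <= y -> x ^+ 2 <= y * x -> x <= y.
Proof.
move=> y0; have [x_le0 _|x_gt0] := lerP x 0; first exact: le_trans x_le0 y0.
by rewrite expr2 ler_pM2r.
Qed.

Lemma prediction_norm_le (R : realFieldType) (a u v cs s0 M cb k : R) :
  0 <= v -> 0 <= cs -> 0 <= s0 -> 0 < M -> 0 < cb -> 0 < k ->
  a ^+ 2 <= 2 * cs * a + cb * M * u - M * v ->
  (v <= cb * u -> k * u <= s0 * a) ->
  a <= cb * M * s0 / k + 2 * cs.
Proof.
move=> v0 cs0 s00 M0 cb0 k0 basic re.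
have cbM0 : 0 <= cb * M by rewrite mulr_ge0 ?ltW.
have Q0 : 0 <= cb * M * s0 / k by rewrite divr_ge0 ?(ltW k0) // mulr_ge0.
have Mv0 : 0 <= M * v by rewrite mulr_ge0 ?(ltW M0).
have [cone|off] := lerP v (cb * u); last first.
  have Mcb : M * (cb * u) <= M * v by rewrite ler_pM2l // ltW.
  suff : a <= 2 * cs by lra.
  by apply: le_of_sqr_le_mul; lra.
have u_le : u <= s0 * a / k by rewrite ler_pdivlMr // mulrC re.
have cbMu : cb * M * u <= cb * M * (s0 * a / k) by rewrite ler_wpM2l.
apply: le_of_sqr_le_mul; first lra.
have -> : (cb * M * s0 / k + 2 * cs) * a = cb * M * (s0 * a / k) + 2 * cs * a by ring.
lra.
Qed.

Lemma l1_error_le_in_cone (R : realFieldType) (a u v s0 cb k Q : R) :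
  0 <= s0 -> 0 < cb -> 0 < k ->
  v <= 2 * cb * u -> k * u <= s0 * a -> a <= Q ->
  u + v <= (1 + 2 * cb) * s0 / k * Q.
Proof.
move=> s00 cb0 k0 cone re aQ.
have sk0 : 0 <= s0 / k by rewrite divr_ge0 // ltW.
have u_le : u <= s0 / k * Q.
  apply: le_trans (ler_wpM2l sk0 aQ).
  by rewrite mulrAC ler_pdivlMr // mulrC re.
have : (1 + 2 * cb) * u <= (1 + 2 * cb) * (s0 / k * Q) by rewrite ler_wpM2l //; lra.
have -> : (1 + 2 * cb) * s0 / k * Q = (1 + 2 * cb) * (s0 / k * Q) by ring.
lra.
Qed.

Lemma l1_error_le_off_cone (R : realFieldType) (a u v cs M cb : R) :
  0 < M -> 0 < cb -> a ^+ 2 <= 2 * cs * a + cb * M * u - M * v ->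
  2 * cb * u < v -> u + v <= (1 + (2 * cb)^-1) * (2 * cs ^+ 2 / M).
Proof.
move=> M0 cb0 basic off.
have Mcb : M * (cb * u) <= M * (v / 2) by rewrite ler_pM2l //; lra.
have := sqr_ge0 (a - cs); rewrite sqrrB => sq0.
have v_le : v <= 2 * cs ^+ 2 / M by rewrite ler_pdivlMr // mulrC; lra.
have u_le : u <= (2 * cb)^-1 * v by rewrite mulrC ler_pdivlMr ?mulr_gt0 //; lra.
have inv_gt0 : 0 < (2 * cb)^-1 by rewrite invr_gt0 mulr_gt0.
have : (1 + (2 * cb)^-1) * v <= (1 + (2 * cb)^-1) * (2 * cs ^+ 2 / M).
  by rewrite ler_wpM2l //; lra.
lra.
Qed.

Lemma l1_error_le (R : realFieldType) (a u v cs s0 M cb k1 k2 : R) :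
  0 <= v -> 0 <= cs -> 0 <= s0 -> 0 < M -> 0 < cb -> 0 < k1 -> 0 < k2 ->
  a ^+ 2 <= 2 * cs * a + cb * M * u - M * v ->
  (v <= cb * u -> k1 * u <= s0 * a) -> (v <= 2 * cb * u -> k2 * u <= s0 * a) ->
  u + v <= (1 + 2 * cb) * s0 / k2 * (cb * M * s0 / k1 + 2 * cs)
           + (1 + (2 * cb)^-1) * (2 * cs ^+ 2 / M).
Proof.
move=> v0 cs0 s00 M0 cb0 k10 k20 basic re1 re2.
have pred_ge0 : 0 <= cb * M * s0 / k1 + 2 * cs.
  have := divr_ge0 (mulr_ge0 (mulr_ge0 (ltW cb0) (ltW M0)) s00) (ltW k10); lra.
have in_cone_ge0 : 0 <= (1 + 2 * cb) * s0 / k2 * (cb * M * s0 / k1 + 2 * cs).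
  by rewrite mulr_ge0 // divr_ge0 ?(ltW k20) // mulr_ge0 //; lra.
have off_cone_ge0 : 0 <= (1 + (2 * cb)^-1) * (2 * cs ^+ 2 / M).
  have inv_gt0 : 0 < (2 * cb)^-1 by rewrite invr_gt0 mulr_gt0.
  rewrite mulr_ge0 ?divr_ge0 ?(ltW M0) //; first lra.
  by rewrite mulr_ge0 ?sqr_ge0.
have [cone|off] := lerP v (2 * cb * u).
  have pred := prediction_norm_le v0 cs0 s00 M0 cb0 k10 basic re1.
  have := l1_error_le_in_cone s00 cb0 k20 cone (re2 cone) pred; lra.
have := l1_error_le_off_cone M0 cb0 basic off; lra.
Qed.

Theorem lemma7 (R : realType) (n p : nat) (X : 'I_n -> 'I_p -> R)
  (f eps : 'I_n -> R) (sigma K : R) (beta0 betahat : 'I_p -> R) (lambda c : R) :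
  (0 < n)%N ->
  (exists j0 : 'I_p, forall i, X i j0 = 1) ->
  (forall j, En (fun i => X i j ^+ 2) = 1) ->
  0 < sigma ->
  (forall b : 'I_p -> R,
      En (fun i => (f i - xdot X beta0 i) ^+ 2) + sigma ^+ 2 * (norm0 beta0)%:R / n%:R
   <= En (fun i => (f i - xdot X b i) ^+ 2) + sigma ^+ 2 * (norm0 b)%:R / n%:R) ->
  Num.sqrt (En (fun i => (f i - xdot X beta0 i) ^+ 2))
    <= K * sigma * Num.sqrt ((norm0 beta0)%:R / n%:R) ->
  0 < lambda ->
  (forall b : 'I_p -> R,
      En (fun i => (f i + eps i - xdot X betahat i) ^+ 2) + lambda / n%:R * norm1 betahat
   <= En (fun i => (f i + eps i - xdot X b i) ^+ 2) + lambda / n%:R * norm1 b) ->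
  1 < c ->
  c * n%:R * norminf (fun j => 2 * En (fun i => X i j * eps i)) <= lambda ->
  let T := supp beta0 in
  let s : R := (#|T|)%:R in
  let cs := Num.sqrt (En (fun i => (f i - xdot X beta0 i) ^+ 2)) in
  let cbar := (c + 1) / (c - 1) in
  0 < kappa X T cbar ->
  0 < kappa X T (2 * cbar) ->
  norm1 (fun j => betahat j - beta0 j)
    <= (1 + 2 * cbar) * Num.sqrt s / kappa X T (2 * cbar)
         * ((1 + c^-1) * (lambda * Num.sqrt s) / (n%:R * kappa X T cbar) + 2 * cs)
       + (1 + (2 * cbar)^-1) * (2 * c / (c - 1)) * (n%:R / lambda) * cs ^+ 2.
Proof.
move=> n_gt0 _ _ _ _ _ lam0 lasso c1 noise T s cs cb k1_gt0 k2_gt0.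
set d := fun j => betahat j - beta0 j.
set u := norm1 (restr T d); set v := norm1 (restr (~: T) d); set a := norm2n X d.
set L := lambda / n%:R; set M := L * (1 - c^-1).
have L0 : 0 < L by rewrite divr_gt0 // ltr0n.
have cb0 : 0 < cb by rewrite divr_gt0 //; lra.
have M0 : 0 < M by rewrite mulr_gt0 // subr_gt0 invf_lt1 //; lra.
have cbM : cb * M = L + L / c by rewrite /M /cb; field; lra.
have S_le : norminf (fun j => 2 * En (fun i => X i j * eps i)) <= L / c.
  by rewrite !ler_pdivlMr ?ltr0n //; lra.
have basic : a ^+ 2 <= 2 * cs * a + cb * M * u - M * v.
  have := lasso_basic_ineq (ltW lam0) (lasso beta0).
  rewrite (norm1_restr_split T d) -/u -/v -/a -/L -/cs.
  have : norminf (fun j => 2 * En (fun i => X i j * eps i)) * (u + v) <= L / c * (u + v).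
    by rewrite ler_wpM2r ?addr_ge0 ?norm1_ge0.
  rewrite cbM /M; lra.
have bound := l1_error_le (norm1_ge0 _) (sqrtr_ge0 _) (sqrtr_ge0 s) M0 cb0 k1_gt0 k2_gt0
  basic (@kappa_mul_le _ _ _ X T cb d) (@kappa_mul_le _ _ _ X T (2 * cb) d).
rewrite (norm1_restr_split T d) -/u -/v; apply: (le_trans bound).
rewrite -/cs le_eqVlt; apply/predU1P; left.
move: (kappa X T cb) (kappa X T (2 * cb)) k1_gt0 k2_gt0 => k1 k2 k1_gt0 k2_gt0.
have [c_gt0 c1_gt0] : 0 < c /\ 0 < c - 1 by split; lra.
rewrite cbM /M /L; field; rewrite !gt_eqF ?ltr0n //.
Qed.
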